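(* Let $0\le\mu<1$, $K>0$, and let $s:[0,\infty)\to[0,\infty)$ be a continuous function with $s(r)\le Kr^{\mu}$ for all sufficiently large $r$. Let $T:[0,\infty)\to[0,\infty)$ be a non-decreasing continuous function, let $\alpha<1$, and let $F\subset\mathbb{R}^+$ be the set of all $r$ such that $T(r)\le\alpha\,T(r+s(r))$. If $F$ has infinite logarithmic measure, i.e. $\int_{F\cap[1,\infty)}\frac{dt}{t}=\infty$, then $$\limsup_{r\to\infty}\frac{\log\log T(r)}{\log r}\ge 1-\mu.$$ *)

From Stdlib Require Import Reals Lra.
Open Scope R_scope.

Definition continuous_on_nonneg (f : R -> R) : Prop :=
  forall x, 0 <= x -> forall eps, 0 < eps ->
    exists delta, 0 < delta /\
      forall y, 0 <= y -> Rabs (y - x) < delta -> Rabs (f y - f x) < eps.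

(* The logarithmic (outer) measure of E, i.e. the outer measure w.r.t. dt/t,
   is infinite: every countable cover of E by open intervals (a n, b n)
   with 0 < a n <= b n has divergent total log-length
   sum_n int_{a n}^{b n} dt/t = sum_n ln (b n / a n). *)
Definition infinite_log_measure (E : R -> Prop) : Prop :=
  forall a b : nat -> R,
    (forall n, 0 < a n <= b n) ->
    (forall x, E x -> exists n, a n < x < b n) ->
    forall M, exists N, M < sum_f_R0 (fun n => ln (b n / a n)) N.

From Stdlib Require Import Reals Lra Classical ClassicalEpsilon.
Open Scope R_scope.

(* Argue by contradiction: if  ln ln T(r) <= (1 - mu - eps) ln r  for all large
   r, then  ln T(r) <= r^beta  for some  0 < beta < 1 - mu.  Put  c = -ln alpha'
   with  alpha <= alpha' < 1;  at every r of F the height  L = ln T  jumps by at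
   least c between r and  r + s(r).  Set  d = (1 - mu)/beta - 1 > 0.

   We cover F greedily: from a point g, let m be the infimum of F beyond g, take
   r in F with  m <= r < m e^eta,  where  eta = max(L(g), c)^{-(d+1)},  and cover
   F between g and  g' = r + s(r)  by  (m e^{-eta}, g' e^eta).  Its logarithmic
   length is at most  3 eta + s(r)/r <= D eta,  since  s(r)/r <= K r^{mu-1}  and
   the growth bound gives  r^{mu-1} <= L(g)^{-(d+1)}.  A potential
   Phi(L) = C max(L,c)^{-d} + B max(0, (2c - L)/c)  drops by at least  D eta
   whenever L increases by c, so the total log-length of the cover is bounded
   by  Phi(L(G)) + O(1),  contradicting the infinite logarithmic measure of F. *)

Lemma exp_le x y : x <= y -> exp x <= exp y.
Proof. intros [H|H]; [left; apply exp_increasing; auto | subst; lra]. Qed.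

Lemma ln_le x y : 0 < x -> x <= y -> ln x <= ln y.
Proof. intros Hx [H|H]; [left; apply ln_increasing; auto | subst; lra]. Qed.

Lemma ln_1_plus_le y : -1 < y -> ln (1 + y) <= y.
Proof.
  intros Hy. apply Rle_trans with (ln (exp y)); [|rewrite ln_exp; lra].
  apply ln_le; [lra | apply exp_ineq1_le].
Qed.

Lemma ln_1_plus_ge u : 0 <= u -> u / (1 + u) <= ln (1 + u).
Proof.
  intros Hu.
  assert (Hinv : ln (/ (1 + u)) <= - (u / (1 + u))).
  { replace (/ (1 + u)) with (1 + - (u / (1 + u))) by (field; lra).
    apply ln_1_plus_le.
    enough (u / (1 + u) < 1) by lra.
    apply Rmult_lt_reg_r with (1 + u); [lra|].
    unfold Rdiv; rewrite Rmult_assoc, Rinv_l by lra; lra. }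
  rewrite ln_Rinv in Hinv by lra. lra.
Qed.

Lemma Rpower_neg_antitone x y d : 0 < x -> x <= y -> 0 < d ->
  Rpower y (- d) <= Rpower x (- d).
Proof.
  intros Hx Hxy Hd. unfold Rpower. apply exp_le.
  assert (ln x <= ln y) by (apply ln_le; lra). nra.
Qed.

Lemma power_decrement x c d : 0 < c <= x -> 0 < d ->
  d * c / (2 + d) * Rpower x (- (d + 1)) <= Rpower x (- d) - Rpower (x + c) (- d).
Proof.
  intros [Hc Hcx] Hd.
  set (u := c / x).
  assert (Hu : 0 < u <= 1).
  { unfold u; split; [apply Rdiv_lt_0_compat; lra|].
    apply Rmult_le_reg_r with x; [lra|]. field_simplify; lra. }
  set (w := d * ln (1 + u)).
  assert (Hw : d * u / 2 <= w).
  { unfold w.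
    assert (u / 2 <= u / (1 + u)).
    { apply Rmult_le_reg_r with (2 * (1 + u)); [lra|]. field_simplify; nra. }
    assert (u / (1 + u) <= ln (1 + u)) by (apply ln_1_plus_ge; lra). nra. }
  assert (Hshift : Rpower (x + c) (- d) = Rpower x (- d) * / exp w).
  { replace (x + c) with (x * (1 + u)) by (unfold u; field; lra).
    unfold Rpower, w. rewrite ln_mult, <- exp_Ropp, <- exp_plus by lra.
    f_equal; ring. }
  assert (Hlower : Rpower x (- (d + 1)) = Rpower x (- d) / x).
  { unfold Rpower. replace (- (d + 1) * ln x) with (- d * ln x + - ln x) by ring.
    rewrite exp_plus, exp_Ropp, exp_ln by lra. reflexivity. }
  assert (Hrel : d * u / (2 + d) <= 1 - / exp w).
  { assert (/ exp w <= / (1 + w)).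
    { apply Rinv_le_contravar; [nra | apply exp_ineq1_le]. }
    enough (d * u / (2 + d) <= 1 - / (1 + w)) by lra.
    apply Rmult_le_reg_r with ((2 + d) * (1 + w)); [nra|].
    field_simplify; [|nra|lra].
    assert (0 <= d * w * (1 - u)) by (apply Rmult_le_pos; nra). nra. }
  assert (Hpos : 0 < Rpower x (- d)) by apply exp_pos.
  rewrite Hshift, Hlower.
  replace (d * c / (2 + d) * (Rpower x (- d) / x))
    with (Rpower x (- d) * (d * u / (2 + d))) by (unfold u; field; lra).
  replace (Rpower x (- d) - Rpower x (- d) * / exp w)
    with (Rpower x (- d) * (1 - / exp w)) by ring.
  apply Rmult_le_compat_l; lra.
Qed.

(* The target size  max(L,c)^{-(d+1)}  of a covering interval at height L, and
   the potential, which decreases by a multiple of the weight at every jump. *)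
Definition weight (d c L : R) : R := Rpower (Rmax L c) (- (d + 1)).

Definition potential (d c C B L : R) : R :=
  C * Rpower (Rmax L c) (- d) + B * Rmax 0 ((2 * c - L) / c).

Lemma weight_pos d c L : 0 < weight d c L.
Proof. apply exp_pos. Qed.

Lemma potential_nonneg d c C B L : 0 <= C -> 0 <= B -> 0 <= potential d c C B L.
Proof.
  intros HC HB. unfold potential.
  assert (0 < Rpower (Rmax L c) (- d)) by apply exp_pos.
  assert (0 <= Rmax 0 ((2 * c - L) / c)) by apply Rmax_l.
  nra.
Qed.

Lemma potential_drop d c C B D L L' : 0 < c -> 0 < d -> 0 <= D ->
  D <= C * (d * c / (2 + d)) -> D * Rpower c (- (d + 1)) <= B -> 0 <= C -> 0 <= B ->
  L + c <= L' -> D * weight d c L <= potential d c C B L - potential d c C B L'.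
Proof.
  intros Hc Hd HD HC HB HC0 HB0 HL. unfold potential, weight.
  destruct (Rle_dec c L) as [HcL|HcL].
  - rewrite (Rmax_left L c), (Rmax_left L' c) by lra.
    assert (Hdec := power_decrement L c d ltac:(lra) Hd).
    assert (Hfar := Rpower_neg_antitone (L + c) L' d ltac:(lra) HL Hd).
    assert (Hlin : Rmax 0 ((2 * c - L') / c) <= Rmax 0 ((2 * c - L) / c)).
    { apply Rle_max_compat_l. unfold Rdiv. apply Rmult_le_compat_r.
      - left; apply Rinv_0_lt_compat; lra.
      - lra. }
    assert (0 < Rpower L (- (d + 1))) by apply exp_pos.
    assert (D * Rpower L (- (d + 1)) <= C * (d * c / (2 + d)) * Rpower L (- (d + 1)))
      by nra.
    assert (C * (d * c / (2 + d) * Rpower L (- (d + 1)))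
              <= C * (Rpower L (- d) - Rpower (L + c) (- d)))
      by (apply Rmult_le_compat_l; lra).
    nra.
  - rewrite (Rmax_right L c) by lra.
    assert (Hfar : Rpower (Rmax L' c) (- d) <= Rpower c (- d)).
    { apply Rpower_neg_antitone; auto. apply Rmax_r. }
    assert (Hnear : Rmax 0 ((2 * c - L) / c) = (2 * c - L) / c).
    { apply Rmax_right, Rlt_le, Rdiv_lt_0_compat; lra. }
    assert (Hlin : Rmax 0 ((2 * c - L') / c) <= (2 * c - L) / c - 1).
    { apply Rmax_lub.
      - enough (1 < (2 * c - L) / c) by lra.
        apply Rmult_lt_reg_r with c; auto. field_simplify; lra.
      - apply Rmult_le_reg_r with c; auto. field_simplify; lra. }
    rewrite Hnear. nra.
Qed.

Lemma inf_approx (E : R -> Prop) g : (exists x, E x) -> (forall x, E x -> g <= x) ->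
  exists m, g <= m /\ (forall x, E x -> m <= x) /\
    (forall del, 0 < del -> exists x, E x /\ x < m + del).
Proof.
  intros Hne Hlb.
  destruct (completeness (fun y => E (- y))) as [l [Hub Hl]].
  { exists (- g). intros y Hy. specialize (Hlb _ Hy). lra. }
  { destruct Hne as [x Hx]. exists (- x). rewrite Ropp_involutive. auto. }
  exists (- l). split; [|split].
  - assert (l <= - g). { apply Hl. intros y Hy. specialize (Hlb _ Hy). lra. } lra.
  - intros x Hx. assert (- x <= l). { apply Hub. rewrite Ropp_involutive. auto. } lra.
  - intros del Hdel. apply NNPP. intros Hn.
    assert (l <= l - del).
    { apply Hl. intros y Hy. apply Rnot_lt_le. intros Hy2.
      apply Hn. exists (- y). split; auto. lra. }
    lra.
Qed.

(* A set E in [1, +oo) has finite logarithmic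
   measure as soon as, from every point g >= G that E still reaches beyond,
   one can cover E between g and some g' by an interval whose log-length is
   paid for by a nonnegative potential P, while a monotone height h rises by
   the fixed amount c.  Iterating the step from G yields a cover of E of
   log-length at most  ln (2 (G+1)) + P G;  the orbit escapes past every point
   of E because h would otherwise grow without bound below h x. *)
Section PotentialCovering.

Variables (E : R -> Prop) (h P : R -> R) (G c : R).
Hypothesis HG : 1 <= G.
Hypothesis Hc : 0 < c.
Hypothesis HE1 : forall x, E x -> 1 <= x.
Hypothesis HP : forall g, 0 <= P g.
Hypothesis Hh : forall x y, G <= x <= y -> h x <= h y.

Definition reaches (g : R) : Prop := exists y, E y /\ g <= y.

Hypothesis Hstep : forall g, G <= g -> reaches g ->
  exists a b g', g <= g' /\ 0 < a <= b /\
    (forall x, E x -> g <= x < g' -> a < x < b) /\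
    ln (b / a) <= P g - P g' /\ h g + c <= h g'.

Record step := Step { step_lo : R; step_hi : R; step_next : R }.

Definition good_step (g : R) (p : step) : Prop :=
  g <= step_next p /\ 0 < step_lo p <= step_hi p /\
  (forall x, E x -> g <= x < step_next p -> step_lo p < x < step_hi p) /\
  ln (step_hi p / step_lo p) <= P g - P (step_next p) /\
  (reaches g -> h g + c <= h (step_next p)).

Lemma good_step_exists g : G <= g -> exists p, good_step g p.
Proof.
  intros Hg. destruct (classic (reaches g)) as [Hr|Hr].
  - destruct (Hstep g Hg Hr) as (a & b & g' & H1 & H2 & H3 & H4 & H5).
    exists (Step a b g'). unfold good_step; simpl. tauto.
  - exists (Step 1 1 g). unfold good_step; simpl.
    replace (1 / 1) with 1 by field. rewrite ln_1.
    split; [lra | split; [lra | split; [intros; lra | split; [lra | tauto]]]].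
Qed.

Definition choose_step (g : R) : step := epsilon (inhabits (Step 1 1 0)) (good_step g).

Fixpoint orbit (n : nat) : R :=
  match n with O => G | S k => step_next (choose_step (orbit k)) end.

Lemma orbit_spec n : G <= orbit n /\ good_step (orbit n) (choose_step (orbit n)).
Proof.
  assert (Hgood : forall g, G <= g -> good_step g (choose_step g)).
  { intros g Hg. unfold choose_step. apply epsilon_spec, good_step_exists, Hg. }
  induction n as [|n [Hge Hgood_n]]; simpl.
  - split; [lra | apply Hgood; lra].
  - assert (G <= step_next (choose_step (orbit n))) by (destruct Hgood_n; lra).
    split; [| apply Hgood]; assumption.
Qed.

Lemma orbit_escapes x : E x -> G <= x -> exists k, orbit k <= x < orbit (S k).
Proof.
  intros Hx HGx. apply NNPP. intros Hno.
  assert (Hbelow : forall N, orbit N <= x).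
  { induction N as [|N IH]; [simpl; lra|].
    apply Rnot_lt_le. intros Hlt. apply Hno. exists N. split; [exact IH | exact Hlt]. }
  assert (Hheight : forall N, h G + INR N * c <= h (orbit N)).
  { induction N as [|N IH]; [simpl; lra|].
    destruct (orbit_spec N) as [_ (_ & _ & _ & _ & Hjump)].
    assert (h (orbit N) + c <= h (orbit (S N))).
    { apply Hjump. exists x. split; auto. }
    rewrite S_INR. lra. }
  destruct (INR_archimed c (h x - h G) Hc) as [N HN].
  assert (h (orbit N) <= h x).
  { apply Hh. split; [apply orbit_spec | apply Hbelow]. }
  specialize (Hheight N). lra.
Qed.

Definition cover_lo (n : nat) : R :=
  match n with O => 1 / 2 | S k => step_lo (choose_step (orbit k)) end.
Definition cover_hi (n : nat) : R :=
  match n with O => G + 1 | S k => step_hi (choose_step (orbit k)) end.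

Lemma cover_bounds n : 0 < cover_lo n <= cover_hi n.
Proof.
  destruct n as [|k]; simpl; [lra|].
  destruct (orbit_spec k) as [_ (_ & H & _)]. exact H.
Qed.

Lemma cover_covers x : E x -> exists n, cover_lo n < x < cover_hi n.
Proof.
  intros Hx. destruct (Rlt_dec x G) as [HxG|HxG].
  - exists O. simpl. specialize (HE1 x Hx). lra.
  - destruct (orbit_escapes x Hx ltac:(lra)) as [k Hk].
    exists (S k). simpl. destruct (orbit_spec k) as [_ (_ & _ & Hcov & _)].
    apply Hcov; auto.
Qed.

(* The log-lengths telescope against the potential. *)
Lemma cover_log_sum N :
  sum_f_R0 (fun n => ln (cover_hi n / cover_lo n)) N
    <= ln (2 * (G + 1)) + P G - P (orbit N).
Proof.
  induction N as [|N IH]; simpl.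
  - replace ((G + 1) / (1 / 2)) with (2 * (G + 1)) by (field; lra). lra.
  - destruct (orbit_spec N) as [_ (_ & _ & _ & Hlen & _)]. lra.
Qed.

Theorem potential_covering : ~ infinite_log_measure E.
Proof.
  intros Hinf.
  destruct (Hinf cover_lo cover_hi cover_bounds cover_covers (ln (2 * (G + 1)) + P G))
    as [N HN].
  assert (Hsum := cover_log_sum N). assert (HPN := HP (orbit N)). lra.
Qed.

End PotentialCovering.

Lemma cover_log_length m r eta sig : 0 < m <= r -> r < m * exp eta -> 0 <= sig ->
  ln ((r + sig) * exp eta / (m * exp (- eta))) <= 3 * eta + sig / r.
Proof.
  intros Hm Hr Hsig.
  assert (Hq : 0 <= sig / r) by (apply Rmult_le_pos; [lra | left; apply Rinv_0_lt_compat; lra]).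
  assert (Hratio : ln (r / m) <= eta).
  { rewrite <- (ln_exp eta). apply ln_le; [apply Rdiv_lt_0_compat; lra|].
    apply Rmult_le_reg_r with m; [lra|]. field_simplify; lra. }
  assert (0 < exp eta) by apply exp_pos.
  replace ((r + sig) * exp eta / (m * exp (- eta)))
    with ((1 + sig / r) * ((r / m) * exp (2 * eta))).
  2:{ rewrite exp_Ropp. replace (2 * eta) with (eta + eta) by ring. rewrite exp_plus.
      field. repeat split; lra. }
  assert (0 < r / m) by (apply Rdiv_lt_0_compat; lra).
  assert (0 < exp (2 * eta)) by apply exp_pos.
  rewrite ln_mult by (try apply Rmult_lt_0_compat; lra).
  rewrite ln_mult, ln_exp by lra.
  assert (ln (1 + sig / r) <= sig / r) by (apply ln_1_plus_le; lra).
  lra.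
Qed.

Lemma weight_bound mu beta c d r L : 1 <= r -> 0 < c -> 0 < beta -> mu <= 1 ->
  (d + 1) * beta = 1 - mu -> L <= Rpower r beta ->
  Rpower r (mu - 1) <= (1 + Rpower c (d + 1)) * weight d c L.
Proof.
  intros Hr Hc Hbeta Hmu Hd HL.
  assert (Hw := weight_pos d c L).
  assert (HRc : 0 < Rpower c (d + 1)) by apply exp_pos.
  assert (Hlnr : 0 <= ln r) by (rewrite <- ln_1; apply ln_le; lra).
  assert (Hd1 : 0 <= d + 1) by nra.
  unfold weight in *. destruct (Rle_dec c L) as [HcL|HcL].
  - rewrite Rmax_left in * by lra.
    assert (HlnL : ln L <= beta * ln r).
    { unfold Rpower in HL. rewrite <- (ln_exp (beta * ln r)). apply ln_le; lra. }
    assert (Rpower r (mu - 1) <= Rpower L (- (d + 1))).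
    { unfold Rpower. apply exp_le. nra. }
    nra.
  - rewrite Rmax_right in * by lra.
    assert (Hunit : Rpower c (d + 1) * Rpower c (- (d + 1)) = 1).
    { rewrite <- Rpower_plus. replace (d + 1 + - (d + 1)) with 0 by ring.
      apply Rpower_O; lra. }
    assert (Rpower r (mu - 1) <= 1).
    { apply Rle_trans with (Rpower r 0); [apply Rle_Rpower; lra | rewrite Rpower_O; lra]. }
    nra.
Qed.

(* The constants
   decay, drop, coef_pow, coef_lin are d, D, C, B of the potential. *)
Section JumpCovering.

Variables (mu K beta c G : R) (s T : R -> R) (E : R -> Prop).
Hypothesis Hbeta : 0 < beta < 1 - mu.
Hypothesis HK : 0 <= K.
Hypothesis Hc : 0 < c.
Hypothesis HG : 1 <= G.
Hypothesis Hs : forall r, G <= r -> 0 <= s r <= K * Rpower r mu.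
Hypothesis HT_pos : forall r, G <= r -> 0 < T r.
Hypothesis HT_mono : forall x y, G <= x <= y -> T x <= T y.
Hypothesis HT_growth : forall r, G <= r -> ln (T r) <= Rpower r beta.
Hypothesis HE1 : forall r, E r -> 1 <= r.
Hypothesis Hjump : forall r, E r -> G <= r -> ln (T r) + c <= ln (T (r + s r)).

Definition decay : R := (1 - mu) / beta - 1.
Definition drop : R := 3 + K * (1 + Rpower c (decay + 1)).
Definition coef_pow : R := drop * (2 + decay) / (decay * c).
Definition coef_lin : R := drop * Rpower c (- (decay + 1)).

Lemma decay_pos : 0 < decay.
Proof.
  unfold decay. enough (1 < (1 - mu) / beta) by lra.
  apply Rmult_lt_reg_r with beta; [lra|]. field_simplify; lra.
Qed.

Lemma decay_spec : (decay + 1) * beta = 1 - mu.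
Proof. unfold decay. field. lra. Qed.

Lemma drop_pos : 0 < drop.
Proof. unfold drop. assert (0 < Rpower c (decay + 1)) by apply exp_pos. nra. Qed.

Lemma spacing_bound r : G <= r -> s r / r <= K * Rpower r (mu - 1).
Proof.
  intros Hr.
  replace (Rpower r (mu - 1)) with (Rpower r mu / r).
  - unfold Rdiv. rewrite <- Rmult_assoc. apply Rmult_le_compat_r.
    + left; apply Rinv_0_lt_compat; lra.
    + apply Hs, Hr.
  - unfold Rpower. replace ((mu - 1) * ln r) with (mu * ln r + - ln r) by ring.
    rewrite exp_plus, exp_Ropp, exp_ln by lra. reflexivity.
Qed.

Lemma jump_step g : G <= g -> reaches E g ->
  exists a b g', g <= g' /\ 0 < a <= b /\
    (forall x, E x -> g <= x < g' -> a < x < b) /\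
    ln (b / a) <= drop * weight decay c (ln (T g)) /\ ln (T g) + c <= ln (T g').
Proof.
  intros Hg Hreach.
  set (eta := weight decay c (ln (T g))).
  assert (Heta : 0 < eta) by apply weight_pos.
  assert (Hexp : 1 < exp eta) by (rewrite <- exp_0; apply exp_increasing; lra).
  assert (Hexp' : 0 < exp (- eta) < 1)
    by (split; [apply exp_pos | rewrite <- exp_0; apply exp_increasing; lra]).
  destruct (inf_approx (fun x => E x /\ g <= x) g) as [m [Hgm [Hmlb Happ]]];
    [exact Hreach | intros x [_ Hx]; exact Hx |].
  destruct (Happ (m * (exp eta - 1))) as [r [[Er Hgr] Hrm]]; [nra|].
  assert (Hmr : m <= r) by (apply Hmlb; split; assumption).
  assert (Hsr := Hs r ltac:(lra)).
  exists (m * exp (- eta)), ((r + s r) * exp eta), (r + s r).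
  split; [lra|]. split; [split; nra|]. split.
  { intros x Ex Hx. assert (m <= x) by (apply Hmlb; split; [exact Ex | lra]). split; nra. }
  split.
  - assert (Hlen := cover_log_length m r eta (s r) ltac:(lra) ltac:(lra) ltac:(lra)).
    assert (Hwt : Rpower r (mu - 1) <= (1 + Rpower c (decay + 1)) * eta).
    { apply weight_bound with beta; try lra; [apply decay_spec|].
      apply Rle_trans with (ln (T r)); [apply ln_le; auto; apply HT_mono; lra|].
      apply HT_growth; lra. }
    assert (K * Rpower r (mu - 1) <= K * ((1 + Rpower c (decay + 1)) * eta))
      by (apply Rmult_le_compat_l; lra).
    assert (Hsp := spacing_bound r ltac:(lra)).
    unfold drop. lra.
  - assert (ln (T g) <= ln (T r)) by (apply ln_le; auto; apply HT_mono; lra).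
    assert (Hj := Hjump r Er ltac:(lra)). lra.
Qed.

Theorem jump_set_not_infinite : ~ infinite_log_measure E.
Proof.
  assert (Hd := decay_pos). assert (HD := drop_pos).
  assert (HB : 0 <= coef_lin)
    by (unfold coef_lin; assert (0 < Rpower c (- (decay + 1))) by apply exp_pos; nra).
  assert (HC : 0 <= coef_pow)
    by (unfold coef_pow; apply Rlt_le, Rdiv_lt_0_compat; nra).
  apply (potential_covering E (fun r => ln (T r))
           (fun r => potential decay c coef_pow coef_lin (ln (T r))) G c); auto.
  - intros g. apply potential_nonneg; assumption.
  - intros x y Hxy. apply ln_le; [apply HT_pos | apply HT_mono]; lra.
  - intros g Hg Hreach.
    destruct (jump_step g Hg Hreach) as (a & b & g' & H1 & H2 & H3 & H4 & H5).
    exists a, b, g'. do 3 (split; [assumption|]). split; [|exact H5].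
    apply Rle_trans with (1 := H4).
    apply potential_drop; try lra.
    + right. unfold coef_pow. field. lra.
    + right. reflexivity.
Qed.

End JumpCovering.

Lemma jump_of_ratio t t' alpha alpha' : 0 < t -> 0 <= t' -> t <= alpha * t' ->
  alpha <= alpha' -> 0 < alpha' -> ln t - ln alpha' <= ln t'.
Proof.
  intros Ht Ht' Hrat Ha Ha'.
  assert (Hle : t <= alpha' * t') by nra.
  assert (0 < t') by nra.
  assert (ln t <= ln (alpha' * t')) by (apply ln_le; lra).
  rewrite ln_mult in * by lra. lra.
Qed.

Lemma log_growth_bound t r gamma beta : 1 < r -> gamma <= beta ->
  ln (ln t) / ln r <= gamma -> ln t <= Rpower r beta.
Proof.
  intros Hr Hgb Hrat.
  assert (Hlnr : 0 < ln r) by (rewrite <- ln_1; apply ln_increasing; lra).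
  assert (Hlnln : ln (ln t) <= beta * ln r).
  { apply Rmult_le_reg_r with (/ ln r); [apply Rinv_0_lt_compat; lra|].
    replace (beta * ln r * / ln r) with beta by (field; lra). unfold Rdiv in Hrat. lra. }
  unfold Rpower. destruct (Rlt_dec 0 (ln t)) as [Hp|Hp].
  - rewrite <- (exp_ln (ln t)) by exact Hp. apply exp_le, Hlnln.
  - assert (0 < exp (beta * ln r)) by apply exp_pos. lra.
Qed.

Lemma intermediate_exponent mu eps : mu < 1 -> 0 < eps ->
  exists beta, 1 - mu - eps <= beta /\ 0 < beta < 1 - mu.
Proof.
  intros Hmu Heps. exists (Rmax (1 - mu - eps) ((1 - mu) / 2)).
  pose proof (Rmax_l (1 - mu - eps) ((1 - mu) / 2)).
  pose proof (Rmax_r (1 - mu - eps) ((1 - mu) / 2)).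
  assert (Rmax (1 - mu - eps) ((1 - mu) / 2) < 1 - mu) by (apply Rmax_lub_lt; lra).
  lra.
Qed.

Lemma jump_constant alpha : alpha < 1 ->
  exists alpha', alpha <= alpha' /\ 0 < alpha' /\ 0 < - ln alpha'.
Proof.
  intros Halpha. exists (Rmax alpha (1 / 2)).
  pose proof (Rmax_l alpha (1 / 2)). pose proof (Rmax_r alpha (1 / 2)).
  assert (ln (Rmax alpha (1 / 2)) < ln 1)
    by (apply ln_increasing; [lra | apply Rmax_lub_lt; lra]).
  rewrite ln_1 in *. lra.
Qed.

Lemma common_upper_bound a b c d : exists G, a <= G /\ b <= G /\ c <= G /\ d <= G.
Proof.
  exists (Rmax (Rmax a b) (Rmax c d)).
  pose proof (Rmax_l a b). pose proof (Rmax_r a b).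
  pose proof (Rmax_l c d). pose proof (Rmax_r c d).
  pose proof (Rmax_l (Rmax a b) (Rmax c d)). pose proof (Rmax_r (Rmax a b) (Rmax c d)).
  lra.
Qed.

Theorem lemma7
  (mu K alpha : R) (s T : R -> R)
  (Hmu : 0 <= mu < 1) (HK : 0 < K)
  (Hs_nonneg : forall r, 0 <= r -> 0 <= s r)
  (Hs_cont : continuous_on_nonneg s)
  (Hs_growth : exists R0, 0 < R0 /\ forall r, R0 <= r -> s r <= K * Rpower r mu)
  (HT_nonneg : forall r, 0 <= r -> 0 <= T r)
  (HT_mono : forall r1 r2, 0 <= r1 <= r2 -> T r1 <= T r2)
  (HT_cont : continuous_on_nonneg T)
  (HT_nontriv : exists r, 0 <= r /\ 0 < T r)
  (Halpha : alpha < 1)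
  (HF : infinite_log_measure
          (fun r => 1 <= r /\ T r <= alpha * T (r + s r))) :
  forall eps, 0 < eps -> forall R1, exists r, R1 < r /\
    (1 - mu) - eps < ln (ln (T r)) / ln r.
Proof.
  intros eps Heps R1. apply NNPP. intros Hneg.
  destruct HT_nontriv as [r0 [Hr0 HTr0]]. destruct Hs_growth as [R0 [HR0 HsR0]].
  destruct (intermediate_exponent mu eps) as [beta [Hb1 Hb2]]; try lra.
  destruct (jump_constant alpha Halpha) as [alpha' (Ha1 & Ha2 & Hc)].
  destruct (common_upper_bound 2 R0 r0 (R1 + 1)) as [G HG].
  assert (HT_pos : forall r, G <= r -> 0 < T r).
  { intros r Hr. apply Rlt_le_trans with (T r0); [exact HTr0 | apply HT_mono; lra]. }
  apply (jump_set_not_infinite mu K beta (- ln alpha') G s T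
           (fun r => 1 <= r /\ T r <= alpha * T (r + s r))); try lra; auto.
  - intros r Hr. split; [apply Hs_nonneg | apply HsR0]; lra.
  - intros x y Hxy. apply HT_mono; lra.
  - intros r Hr. apply log_growth_bound with (1 - mu - eps); [lra | exact Hb1|].
    apply Rnot_lt_le. intros Hlt. apply Hneg. exists r. split; [lra | exact Hlt].
  - intros r Hr. tauto.
  - intros r [Hr1 Hrat] HGr. apply Rle_trans with (ln (T r) - ln alpha'); [lra|].
    apply (jump_of_ratio _ _ alpha); try lra; [apply HT_pos; lra|].
    apply HT_nonneg. assert (0 <= s r) by (apply Hs_nonneg; lra). lra.
Qed.
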